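(* Let $p$ be an odd prime, $t,s$ positive integers with $p\nmid s$, $r=p^t$, $q=r^s$. Let $\varphi$ be a nontrivial multiplicative character of $\mathbb{F}_q$, and let $\overline{\varphi}^*$ denote the restriction of $\overline{\varphi}$ to $\mathbb{F}_r^*$. Put $$B=\sum_{x\in\mathbb{F}_q^*,\ \mathrm{Tr}_{q/r}(x+1)=0}\varphi(x).$$ Then $|B|=\sqrt{q}/\sqrt{r}$ if $\overline{\varphi}^*$ is nontrivial, and $|B|=\sqrt{q}/r$ if $\overline{\varphi}^*$ is trivial.
   Context: $\mathrm{Tr}_{q/r}$ is the trace map from $\mathbb{F}_q$ to $\mathbb{F}_r$. A multiplicative character of $\mathbb{F}_q$ is a homomorphism $\mathbb{F}_q^*\to\mathbb{C}^*$; $\overline{\varphi}$ is its complex conjugate; it is trivial if identically $1$. *)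

From mathcomp Require Import all_boot all_order all_algebra all_field.
Set Implicit Arguments. Unset Strict Implicit. Unset Printing Implicit Defensive.
Import GRing.Theory Num.Theory.
Local Open Scope ring_scope.

(* A multiplicative character of F: a group homomorphism F^* -> C^*,
   represented as a function on F (its value at 0 is irrelevant). *)
Definition mult_char (F : finFieldType) (phi : F -> algC) : Prop :=
  (forall x y : F, x != 0 -> y != 0 -> phi (x * y) = phi x * phi y) /\
  (forall x : F, x != 0 -> phi x != 0).

Definition trivial_char (F : finFieldType) (phi : F -> algC) : Prop :=
  forall x : F, x != 0 -> phi x = 1.

(* The restriction of conj(phi) to F_r^*, where F_r = {x | x^r = x} is the
   subfield of order r of F, is trivial. *)
Definition conj_restr_trivial (F : finFieldType) (r : nat) (phi : F -> algC) : Prop :=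
  forall x : F, x != 0 -> x ^+ r = x -> (phi x)^* = 1.

Definition trace_qr (F : finFieldType) (r s : nat) (x : F) : F :=
  \sum_(i < s) x ^+ (r ^ i).

(* Put c = -s, which is nonzero because p does not divide s; then B is the sum
   of phi over the fibre S = Tr^-1(c).  Expanding the square,
     |B|^2 = sum_u phi(u) #{y in S | u y in S}.
   For u in F_r we have Tr(u y) = u Tr y, so the count is |S| = q/r for u = 1
   and 0 otherwise.  For u outside F_r the F_r-linear map y |-> (Tr y, Tr(u y))
   is onto F_r^2, so the count is q/r^2.  As phi sums to 0 over F_q^*, this gives
     r^2 |B|^2 = q (r - sum_{u in F_r^*} phi u),
   and the last sum is 0 or r - 1 according as phi is nontrivial or trivial on
   F_r^*. *)

From HB Require Import structures.
From mathcomp Require Import all_boot all_order all_algebra all_field.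
From mathcomp Require Import ring.
Set Implicit Arguments. Unset Strict Implicit. Unset Printing Implicit Defensive.
Import GRing.Theory Num.Theory.
Local Open Scope ring_scope.

Section ZmodFibres.
Variables (V W : finZmodType) (h : V -> W).
Hypothesis hB : zmod_morphism h.

Lemma card_zmod_fibre z : z \in h @: setT ->
  #|[set x | h x == z]| = #|[set x | h x == 0]|.
Proof.
case/imsetP=> y _ ->; apply/eqP; rewrite eqn_leq; apply/andP; split.
  rewrite -(card_imset _ (addIr (- y))); apply/subset_leq_card/subsetP.
  by move=> w /imsetP[x]; rewrite !inE => /eqP hx ->; rewrite hB hx subrr.
rewrite -(card_imset _ (subrI y)); apply/subset_leq_card/subsetP.
by move=> w /imsetP[k]; rewrite !inE => /eqP hk ->; rewrite hB hk subr0.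
Qed.

Lemma card_zmod_image_kernel :
  #|V| = (#|h @: setT| * #|[set x | h x == 0%R]|)%N.
Proof.
rewrite -cardsT -sum1_card (partition_big_imset h) /= -sum_nat_const.
apply: eq_bigr => z hz; rewrite -(card_zmod_fibre hz) -sum1_card.
by apply: eq_bigl => x; rewrite !inE.
Qed.

End ZmodFibres.

Lemma card_roots_lt (R : finIdomainType) (P : {poly R}) :
  P != 0 -> (#|[set x | root P x]| < size P)%N.
Proof.
move=> P_nz; rewrite cardE; apply: max_poly_roots => //; last exact: enum_uniq.
by apply/allP=> x; rewrite mem_enum inE.
Qed.

Section MultiplicativeCharacter.
Variables (F : finFieldType) (phi : F -> algC).
Hypothesis phi_char : mult_char phi.

Lemma char_mul x y : x != 0 -> y != 0 -> phi (x * y) = phi x * phi y.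
Proof. exact: phi_char.1. Qed.

Lemma char1 : phi 1 = 1.
Proof.
have phi1_nz : phi 1 != 0 by apply: phi_char.2; rewrite oner_eq0.
by apply: (mulfI phi1_nz); rewrite -char_mul ?oner_eq0 // !mulr1.
Qed.

Lemma char_exp x n : x != 0 -> phi (x ^+ n) = phi x ^+ n.
Proof.
move=> x_nz; elim: n => [|n IHn]; first by rewrite !expr0 char1.
by rewrite !exprS char_mul ?expf_neq0 // IHn.
Qed.

Lemma char_conj x : x != 0 -> (phi x)^* = phi x^-1.
Proof.
move=> x_nz; have phix_nz : phi x != 0 by apply: phi_char.2.
have card_gt1 : (1 < #|F|)%N by rewrite (cardD1 0) (cardD1 1) !inE oner_eq0.
have x_order : x ^+ #|F|.-1 = 1.
  by apply: (mulfI x_nz); rewrite mulr1 -exprS prednK ?expf_card // ltnW.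
have norm1 : `|phi x| = 1.
  apply/eqP; rewrite -(pexpr_eq1 (n := #|F|.-1)) //; last by rewrite -ltnS prednK // ltnW.
  by rewrite -normrX -char_exp // x_order char1 normr1.
apply: (mulfI phix_nz); rewrite -char_mul ?invr_eq0 // mulfV // char1.
by rewrite -normCK norm1 expr1n.
Qed.

Lemma sum_char_eq0 (P : pred F) :
  (forall u, P u -> u != 0) -> (forall a u, P a -> P (a * u) = P u) ->
  ~ (forall u, P u -> phi u = 1) -> \sum_(u | P u) phi u = 0.
Proof.
move=> P_nz P_mul phi_nt.
have [a /andP[Pa phia_nt]] : exists a, P a && (phi a != 1).
  apply/existsP; apply: contra_notT phi_nt => /existsPn phi_t u Pu.
  by apply/eqP; have := phi_t u; rewrite Pu negbK.
have a_nz := P_nz a Pa.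
have sum_phi_a : \sum_(u | P u) phi u = phi a * \sum_(u | P u) phi u.
  rewrite [LHS](reindex_inj (mulfI a_nz)) mulr_sumr /=.
  by apply: eq_big => u; rewrite /= P_mul // => /P_nz u_nz; exact: char_mul.
have : (1 - phi a) * \sum_(u | P u) phi u = 0 by rewrite mulrBl mul1r -sum_phi_a subrr.
by move/eqP; rewrite mulf_eq0 subr_eq0 eq_sym (negbTE phia_nt) => /eqP.
Qed.

Lemma sqr_norm_char_sum (S : {set F}) : 0 \notin S ->
  `|\sum_(x in S) phi x| ^+ 2 = \sum_u phi u * #|[set y in S | u * y \in S]|%:R.
Proof.
move=> S_nz; have nzS y : y \in S -> y != 0 by apply: contraTneq => ->.
rewrite normCK rmorph_sum mulr_sumr.
transitivity (\sum_(y in S) \sum_u phi u * (u * y \in S)%:R).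
  apply: eq_bigr => y /nzS y_nz; rewrite mulr_suml (reindex_inj (mulIf y_nz)) big_mkcond /=.
  apply: eq_bigr => u _; case: ifP => [/nzS uy_nz|_]; rewrite ?mulr1 ?mulr0 //.
  by rewrite char_conj // -char_mul ?invr_eq0 // mulfK.
rewrite exchange_big /=; apply: eq_bigr => u _; rewrite -mulr_sumr.
rewrite -[in RHS]sum1_card natr_sum; congr (_ * _).
rewrite big_mkcond [RHS]big_mkcond; apply: eq_bigr => y _; rewrite !inE.
by case: (y \in S); case: (u * y \in S).
Qed.

Lemma sum_char_compl (A : {set F}) : ~ trivial_char phi -> 0 \in A ->
  \sum_(u | u \notin A) phi u = - \sum_(u in A | u != 0) phi u.
Proof.
move=> phi_nt A0.
have nz_mul (a u : F) : a != 0 -> (a * u != 0) = (u != 0) by rewrite mulf_eq0 negb_or => ->.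
have := @sum_char_eq0 (fun u => u != 0) (fun _ => id) nz_mul phi_nt.
rewrite (bigID (mem A)) /= => sum_nz.
apply/eqP; rewrite -addr_eq0 addrC -[X in _ == X]sum_nz; apply/eqP.
congr (_ + _); apply: eq_bigl => u; first by rewrite andbC.
by case: eqP => // ->; rewrite A0.
Qed.

End MultiplicativeCharacter.

(* The library declares finType and zmodType on pairs separately; this builds
   their join finZmodType. *)
HB.saturate prod.

Section Trace.
Variables (F : finFieldType) (p t s : nat).
Hypotheses (p_prime : prime p) (t_gt0 : (0 < t)%N) (s_gt0 : (0 < s)%N).
Hypothesis card_F : #|F| = ((p ^ t) ^ s)%N.

Local Notation r := (p ^ t)%N.
Local Notation Tr := (@trace_qr F r s).
Local Notation Fr := [set x : F | x ^+ r == x].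
Local Notation K := [set x : F | Tr x == 0].

Lemma r_gt1 : (1 < r)%N.
Proof. by rewrite -{1}(expn0 p) ltn_exp2l // prime_gt1. Qed.

Lemma pchar_F : p \in [pchar F].
Proof. by apply: (card_finPcharP (n := (t * s)%N)); rewrite // card_F expnM. Qed.

Lemma exprD_r_pow i (x y : F) : (x + y) ^+ (r ^ i) = x ^+ (r ^ i) + y ^+ (r ^ i).
Proof.
by apply: exprDn_pchar; rewrite (eq_pnat _ (pcharf_eq pchar_F)) -expnM pnatX pnat_id.
Qed.

Lemma traceD : {morph Tr : x y / x + y}.
Proof. by move=> x y; rewrite /trace_qr -big_split; apply: eq_bigr => i _; rewrite exprD_r_pow. Qed.

Lemma traceB : {morph Tr : x y / x - y}.
Proof. by move=> x y; apply/(addIr (Tr y)); rewrite -traceD !subrK. Qed.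

Lemma trace0 : Tr 0 = 0.
Proof. by rewrite -(subrr (0 : F)) traceB !subrr. Qed.

Lemma trace1 : Tr 1 = s%:R.
Proof.
rewrite /trace_qr (eq_bigr (fun _ => 1)); last by move=> i _; rewrite expr1n.
by rewrite sumr_const card_ord.
Qed.

Lemma traceZ (l x : F) : l \in Fr -> Tr (l * x) = l * Tr x.
Proof.
rewrite inE => /eqP lr; rewrite /trace_qr mulr_sumr; apply: eq_bigr => i _.
rewrite exprMn; congr (_ * _); elim: (nat_of_ord i) => [|n IHn]; first by rewrite expr1.
by rewrite expnSr exprM IHn lr.
Qed.

Lemma trace_Fr x : Tr x \in Fr.
Proof.
have rD : {morph (fun y : F => y ^+ r) : y z / y + z}.
  by move=> y z; have := exprD_r_pow 1 y z; rewrite expn1.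
have r0 : (0 : F) ^+ r = 0 by rewrite expr0n eqn0Ngt (ltnW r_gt1).
rewrite inE /trace_qr (big_morph _ rD r0); apply/eqP.
rewrite (eq_bigr (fun i : 'I_s => x ^+ (r ^ i.+1))); last by move=> i _; rewrite -exprM expnSr.
case: s s_gt0 card_F => // n _ cardF.
rewrite big_ord_recr big_ord_recl /= -cardF expf_card expn0 expr1 addrC.
by congr (_ + _); apply: eq_bigr.
Qed.

Lemma card_Fr_le : (#|Fr| <= r)%N.
Proof.
have size_P : size ('X^r - 'X : {poly F}) = r.+1.
  by rewrite size_polyDl ?size_polyXn // size_polyN size_polyX ltnS r_gt1.
have P_nz : ('X^r - 'X : {poly F}) != 0 by rewrite -size_poly_eq0 size_P.
have -> : Fr = [set x | root ('X^r - 'X) x].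
  by apply/setP=> x; rewrite !inE rootE !hornerE subr_eq0.
by rewrite -ltnS -size_P card_roots_lt.
Qed.

Lemma card_trace_kernel_le : (#|K| <= r ^ s.-1)%N.
Proof.
pose P : {poly F} := \sum_(i < s) 'X^(r ^ i).
have size_P : size P = (r ^ s.-1).+1.
  rewrite /P; case: s s_gt0 => // n _ /=.
  rewrite big_ord_recr /= addrC size_polyDl ?size_polyXn //.
  apply: leq_ltn_trans (size_sum _ _ _) _; rewrite ltnS.
  by apply/bigmax_leqP => i _; rewrite size_polyXn ltn_exp2l ?r_gt1.
have P_nz : P != 0 by rewrite -size_poly_eq0 size_P.
have -> : K = [set x | root P x].
  by apply/setP=> x; rewrite !inE rootE horner_sum; under eq_bigr do rewrite hornerXn.
by rewrite -ltnS -size_P card_roots_lt.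
Qed.

Lemma card_trace_image : #|Tr @: setT| = r.
Proof.
have im_Fr : Tr @: setT \subset Fr by apply/subsetP=> _ /imsetP[x _ ->]; apply: trace_Fr.
have le_im := leq_trans (subset_leq_card im_Fr) card_Fr_le.
have le_ker := card_trace_kernel_le.
have rs : (r ^ s = r ^ s.-1 * r)%N by rewrite -expnSr prednK.
have r_pow_gt0 : (0 < r ^ s.-1)%N by rewrite expn_gt0 ltnW ?r_gt1.
apply/eqP; rewrite eqn_leq le_im leqNgt; apply/negP=> lt_im.
have : (#|K| * #|Tr @: setT| < r ^ s.-1 * r)%N.
  by apply: leq_ltn_trans (leq_mul le_ker (leqnn _)) _; rewrite ltn_pmul2l.
by rewrite -rs -card_F (card_zmod_image_kernel traceB) mulnC ltnn.
Qed.

Lemma trace_image : Tr @: setT = Fr.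
Proof.
apply/eqP; rewrite eqEcard card_trace_image card_Fr_le andbT.
by apply/subsetP=> _ /imsetP[x _ ->]; apply: trace_Fr.
Qed.

Lemma card_Fr : #|Fr| = r.
Proof. by rewrite -trace_image card_trace_image. Qed.

Lemma card_trace_fibre c : c \in Fr -> (#|[set x | Tr x == c]| * r)%N = #|F|.
Proof.
rewrite -trace_image => c_im.
by rewrite (card_zmod_fibre traceB c_im) (card_zmod_image_kernel traceB) card_trace_image mulnC.
Qed.

Lemma Fr_mul x y : x \in Fr -> y \in Fr -> x * y \in Fr.
Proof. by rewrite !inE exprMn => /eqP-> /eqP->. Qed.

Lemma Fr_inv x : x \in Fr -> x^-1 \in Fr.
Proof. by rewrite !inE exprVn => /eqP->. Qed.

Lemma Fr_sub x y : x \in Fr -> y \in Fr -> x - y \in Fr.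
Proof.
rewrite !inE => /eqP xr /eqP yr; apply/eqP/(addIr y).
by have := exprD_r_pow 1 (x - y) y; rewrite expn1 subrK xr yr => <-.
Qed.

Lemma trace_pair_onto u a b : u \notin Fr -> a \in Fr -> b \in Fr ->
  exists y, Tr y = a /\ Tr (u * y) = b.
Proof.
move=> u_Fr a_Fr b_Fr.
have /imsetP[y1 _ Ty1] : 1 \in Tr @: setT by rewrite trace_image inE expr1n.
pose v := Tr (u * y1).
have uv_nz : u - v != 0.
  by apply: contraNneq u_Fr => /subr0_eq ->; apply: trace_Fr.
pose y2 := y1 / (u - v); pose k := y2 - Tr y2 * y1.
have Tk : Tr k = 0 by rewrite traceB traceZ ?trace_Fr // -Ty1 mulr1 subrr.
(* [y1] and [k] have trace pairs (1, v) and (0, 1), which span Fr^2. *)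
have Tuk : Tr (u * k) = 1.
  rewrite mulrBr traceB (mulrCA u (Tr y2)) (traceZ _ (trace_Fr y2)) (mulrC (Tr y2)).
  rewrite -(traceZ _ (trace_Fr (u * y1))) -traceB -mulrBl.
  by rewrite mulrC divfK.
have ab_Fr : b - a * v \in Fr by rewrite Fr_sub ?Fr_mul ?trace_Fr.
exists (a * y1 + (b - a * v) * k); split.
  by rewrite traceD (traceZ _ a_Fr) (traceZ _ ab_Fr) -Ty1 Tk mulr0 addr0 mulr1.
rewrite mulrDr traceD (mulrCA u a) (mulrCA u (b - a * v)).
by rewrite (traceZ _ a_Fr) (traceZ _ ab_Fr) Tuk mulr1 addrC subrK.
Qed.

Lemma card_trace_pair_fibre u a b : u \notin Fr -> a \in Fr -> b \in Fr ->
  (#|[set y | (Tr y == a) && (Tr (u * y)%R == b)]| * r ^ 2)%N = #|F|.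
Proof.
move=> u_Fr a_Fr b_Fr; pose h y := (Tr y, Tr (u * y)).
have hB : zmod_morphism h by move=> x y; rewrite /h mulrBr !traceB.
have im_h : h @: setT = setX Fr Fr.
  apply/setP=> -[a' b']; rewrite inE /=; apply/imsetP/andP=> [[y _ [-> ->]]|[a'_Fr b'_Fr]].
    by rewrite !trace_Fr.
  by have [y [Ty Tuy]] := trace_pair_onto u_Fr a'_Fr b'_Fr; exists y; rewrite /h ?Ty ?Tuy.
have ab_im : (a, b) \in h @: setT by rewrite im_h inE /= a_Fr b_Fr.
have -> : [set y | (Tr y == a) && (Tr (u * y) == b)] = [set y | h y == (a, b)].
  by apply/setP=> y; rewrite !inE.
by rewrite (card_zmod_fibre hB ab_im) (card_zmod_image_kernel hB) im_h cardsX card_Fr mulnC.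
Qed.

Variables (phi : F -> algC) (c : F).
Hypotheses (phi_char : mult_char phi) (phi_nt : ~ trivial_char phi).
Hypotheses (c_Fr : c \in Fr) (c_nz : c != 0).

Local Notation S := [set x : F | Tr x == c].

Lemma card_trace_fibre_mul_Fr u : u \in Fr ->
  #|[set y in S | u * y \in S]| = if u == 1 then #|S| else 0%N.
Proof.
move=> u_Fr; case: eqP => [->|u_n1].
  by apply: eq_card => y; rewrite !inE mul1r andbb.
apply/eqP; rewrite cards_eq0; apply/eqP/setP=> y; rewrite !inE traceZ //.
apply/negbTE/andP=> -[/eqP-> /eqP ucc]; apply: u_n1.
by apply: (mulIf c_nz); rewrite mul1r.
Qed.

Lemma card_trace_fibre_mul_notFr u : u \notin Fr ->
  (#|[set y in S | (u * y)%R \in S]| * r ^ 2)%N = #|F|.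
Proof.
move=> u_Fr; rewrite -(card_trace_pair_fibre u_Fr c_Fr c_Fr).
by congr (_ * _)%N; apply: eq_card => y; rewrite !inE.
Qed.

Lemma sqr_norm_sum_trace_fibre :
  (r ^ 2)%:R * `|\sum_(x in S) phi x| ^+ 2 =
  #|F|%:R * (r%:R - \sum_(u in Fr | u != 0) phi u).
Proof.
have S0 : 0 \notin S by rewrite inE trace0 // eq_sym.
have Fr1 : 1 \in Fr by rewrite inE expr1n.
have Fr0 : 0 \in Fr by rewrite -trace0 trace_Fr.
rewrite sqr_norm_char_sum // mulr_sumr (bigID (mem Fr)) /=.
rewrite (bigD1 1) //= big1 => [|u /andP[u_Fr u_n1]]; last first.
  by rewrite card_trace_fibre_mul_Fr // (negbTE u_n1) !mulr0.
rewrite card_trace_fibre_mul_Fr // eqxx char1 // mul1r addr0.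
under eq_bigr => u u_Fr do rewrite mulrCA -natrM mulnC card_trace_fibre_mul_notFr //.
rewrite -mulr_suml sum_char_compl //.
by rewrite -(card_trace_fibre c_Fr) !natrM; ring.
Qed.

Lemma sum_char_Fr_eq0 : ~ conj_restr_trivial r phi -> \sum_(u in Fr | u != 0) phi u = 0.
Proof.
move=> phi_Fr_nt; apply: sum_char_eq0 => // [u /andP[] //|a u /andP[a_Fr a_nz]|phi_Fr_t].
  rewrite mulf_eq0 (negbTE a_nz) /=; congr andb; apply/idP/idP => [au_Fr|u_Fr].
    by rewrite -(mulKf a_nz u) Fr_mul ?Fr_inv.
  exact: Fr_mul.
by apply: phi_Fr_nt => x x_nz xr; rewrite phi_Fr_t ?conjC1 // inE xr eqxx x_nz.
Qed.

Lemma sum_char_Fr_trivial : conj_restr_trivial r phi ->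
  \sum_(u in Fr | u != 0) phi u = r%:R - 1.
Proof.
move=> phi_Fr_t; rewrite (eq_bigr (fun _ => 1)) => [|u /andP[]]; last first.
  by rewrite inE => /eqP ur u_nz; rewrite -[phi u]conjCK phi_Fr_t ?conjC1.
have Fr0 : 0 \in Fr by rewrite -trace0 trace_Fr.
rewrite (eq_bigl (fun u => u \in Fr :\ 0)) => [|u]; last by rewrite in_setD1 andbC.
by rewrite sumr_const -[in RHS]card_Fr (cardsD1 0 Fr) Fr0 add1n -natr1 addrK.
Qed.

End Trace.

Theorem mainTheorem5 (p t s : nat) (F : finFieldType) (phi : F -> algC) :
  prime p -> odd p -> (0 < t)%N -> (0 < s)%N -> ~~ (p %| s)%N ->
  #|F| = ((p ^ t) ^ s)%N ->
  mult_char phi -> ~ trivial_char phi ->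
  let r := (p ^ t)%N in
  let q := (r ^ s)%N in
  let B := \sum_(x : F | (x != 0) && (trace_qr r s (x + 1) == 0)) phi x in
  (~ conj_restr_trivial r phi -> `|B| = sqrtC q%:R / sqrtC r%:R) /\
  (conj_restr_trivial r phi -> `|B| = sqrtC q%:R / r%:R).
Proof.
move=> p_prime _ t_gt0 s_gt0 p_ndvd_s card_F phi_char phi_nt r q B.
pose c : F := - s%:R.
have c_Fr : c \in [set x : F | x ^+ r == x].
  have -> : c = trace_qr r s (0 - 1) by rewrite traceB // trace0 // trace1 sub0r.
  exact: trace_Fr.
have c_nz : c != 0 by rewrite oppr_eq0 -(dvdn_pcharf (pchar_F p_prime card_F)).
have B_fibre : B = \sum_(x in [set x | trace_qr r s x == c]) phi x.
  apply: eq_bigl => x; rewrite inE traceD // trace1 addr_eq0.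
  by case: eqP => [->|//]; rewrite trace0 // eq_sym (negbTE c_nz).
have := sqr_norm_sum_trace_fibre p_prime t_gt0 s_gt0 card_F phi_char phi_nt c_Fr c_nz.
rewrite -B_fibre card_F -/r -/q => sqr_normB.
have r_nz : (r%:R : algC) != 0 by rewrite pnatr_eq0 -lt0n expn_gt0 prime_gt0.
have normB2 : `|B| ^+ 2 =
    q%:R * (r%:R - \sum_(u in [set x : F | x ^+ r == x] | u != 0) phi u) / r%:R ^+ 2.
  by rewrite -sqr_normB natrX mulrC mulKf ?expf_neq0.
split=> [/(sum_char_Fr_eq0 phi_char) X | /(sum_char_Fr_trivial p_prime t_gt0 s_gt0 card_F) X];
  apply/eqP; rewrite -(eqrXn2 (_ : 0 < 2)%N) ?divr_ge0 ?sqrtC_ge0 ?ler0n //;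
  by rewrite exprMn exprVn !sqrtCK normB2 X; apply/eqP; field.
Qed.
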